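(* For all $M,N\in\Lambda$: $\langle[\,],M^\bullet\rangle\to^*\underline{N}$ if and only if ($M\to_\beta^* N$ and $N\in\mathrm{NF}$). Here $[\,]$ is the trivial context consisting only of the hole.
   Context: **$\lambda$-terms and contexts.** $\Lambda$ is the set of untyped $\lambda$-terms (up to $\alpha$-equivalence). $\to_\beta^*$ is multi-step $\beta$-reduction (the reflexive–transitive closure of one-step $\beta$-reduction), and $\mathrm{NF}\subseteq\Lambda$ is the set of $\beta$-normal forms. A context $C[\,]$ is a $\lambda$-term with exactly one hole $[\,]$. $C[M]$ is the result of filling the hole with $M$; binders of $C$ may capture free variables of $M$. We write $M\,\vec N$ for $M\,N_1\cdots N_n$ (left-associated), where $n\ge 0$. **Atoms and $\Lambda^\bullet$.** For each $M\in\Lambda$ there is a new formal symbol $\underline{M}$, called an atom. Atoms are constants: they have no free variables, and substitution leaves them unchanged. For $M\in\Lambda$, $M^\bullet$ replaces each free occurrence of each variable $x$ in $M$ by the atom $\underline{x}$. Set $\Lambda^\bullet=\{M^\bullet: M\in\Lambda\}$, with substitution extended to these terms by treating atoms as constants. **The set $\Lambda^{\mathrm{rb}}$.** It is the least set such that: 1. $\underline{M}\in\Lambda^{\mathrm{rb}}$ for all $M\in\Lambda$; 2. $\langle C[\,],M\rangle\in\Lambda^{\mathrm{rb}}$ for every context $C[\,]$ and every $M\in\Lambda^\bullet$; 3. $\langle C[\,],M\,\vec N\rangle\in\Lambda^{\mathrm{rb}}$ for every context $C[\,]$, every $M\in\Lambda^{\mathrm{rb}}$ and all $N_1,\dots,N_n\in\Lambda^\bullet$.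 **The relation $\to$ on $\Lambda^{\mathrm{rb}}$.** It is the least relation satisfying: - (R1) $\langle C[\,],\underline{M}\rangle\to\underline{C[M]}$ for $M\in\Lambda$; - (R2) $\langle C[\,],\lambda x.M\rangle\to\langle C[\lambda x.[\,]],M[x:=\underline{x}]\rangle$ for $\lambda x.M\in\Lambda^\bullet$; - (R3) $\langle C[\,],\underline{M}\,N_0\,\vec N\rangle\to\langle C[\,],\langle M\,[\,],N_0\rangle\,\vec N\rangle$ for $M\in\Lambda$ and $N_0,\vec N\in\Lambda^\bullet$; - (R4) $\langle C[\,],(\lambda x.M)\,N_0\,\vec N\rangle\to\langle C[\,],M[x:=N_0]\,\vec N\rangle$ for $\lambda x.M,N_0,\vec N\in\Lambda^\bullet$; - (R5) if $M\to M'$ with $M,M'\in\Lambda^{\mathrm{rb}}$, then $\langle C[\,],M\,\vec N\rangle\to\langle C[\,],M'\,\vec N\rangle$ for every context $C[\,]$ and $\vec N\in\Lambda^\bullet$. $\to^*$ denotes the reflexive–transitive closure of $\to$. *)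

From Stdlib Require Import Relations List.
From mathcomp Require Import all_boot.
Set Implicit Arguments.
Unset Strict Implicit.
Unset Printing Implicit Defensive.

(* Untyped lambda-terms, locally nameless representation:             *)
(* bound variables are de Bruijn indices, free variables are names    *)
(* (natural numbers).  Lambda = locally closed terms; alpha-equivalent *)
(* terms have the same representation.                                 *)
Inductive term : Type :=
| bvar : nat -> term
| fvar : nat -> term
| app  : term -> term -> term
| lam  : term -> term.

Fixpoint closed_at (k : nat) (t : term) : bool :=
  match t with
  | bvar i => i < k
  | fvar _ => true
  | app t1 t2 => closed_at k t1 && closed_at k t2
  | lam t1 => closed_at k.+1 t1
  end.

Definition lc (t : term) : bool := closed_at 0 t.

Fixpoint open_rec (k : nat) (u t : term) : term :=
  match t with
  | bvar i => if i == k then u else bvar i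
  | fvar x => fvar x
  | app t1 t2 => app (open_rec k u t1) (open_rec k u t2)
  | lam t1 => lam (open_rec k.+1 u t1)
  end.
Definition open (t u : term) := open_rec 0 u t.

Fixpoint close_rec (k x : nat) (t : term) : term :=
  match t with
  | bvar i => bvar i
  | fvar y => if y == x then bvar k else fvar y
  | app t1 t2 => app (close_rec k x t1) (close_rec k x t2)
  | lam t1 => lam (close_rec k.+1 x t1)
  end.
(* lam_ x t  is the term  \x. t  (binding the name x) *)
Definition close (x : nat) (t : term) := close_rec 0 x t.

Fixpoint fv (t : term) : seq nat :=
  match t with
  | bvar _ => [::]
  | fvar x => [:: x]
  | app t1 t2 => fv t1 ++ fv t2
  | lam t1 => fv t1
  end.

Inductive beta : term -> term -> Prop :=
| beta_red : forall M N, lc (lam M) -> lc N -> beta (app (lam M) N) (open M N)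
| beta_appl : forall M M' N, beta M M' -> lc N -> beta (app M N) (app M' N)
| beta_appr : forall M N N', lc M -> beta N N' -> beta (app M N) (app M N')
| beta_lam : forall (L : seq nat) M M',
    (forall x, x \notin L -> beta (open M (fvar x)) (open M' (fvar x))) ->
    beta (lam M) (lam M').

Definition beta_star : term -> term -> Prop := clos_refl_trans term beta.

Definition NF (N : term) : Prop := lc N /\ ~ (exists N', beta N N').

(* Contexts: lambda-terms with exactly one hole, with NAMED binders,   *)
(* so that filling the hole captures free variables.                    *)
Inductive ctx : Type :=
| Hole : ctx
| CLam : nat -> ctx -> ctx
| CAppL : ctx -> term -> ctx
| CAppR : term -> ctx -> ctx.

Fixpoint ctx_ok (C : ctx) : bool :=
  match C with
  | Hole => true
  | CLam _ C1 => ctx_ok C1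
  | CAppL C1 N => ctx_ok C1 && lc N
  | CAppR N C1 => lc N && ctx_ok C1
  end.

Fixpoint plug (C : ctx) (M : term) : term :=
  match C with
  | Hole => M
  | CLam x C1 => lam (close x (plug C1 M))
  | CAppL C1 N => app (plug C1 M) N
  | CAppR N C1 => app N (plug C1 M)
  end.

Fixpoint ctx_fill (C D : ctx) : ctx :=
  match C with
  | Hole => D
  | CLam x C1 => CLam x (ctx_fill C1 D)
  | CAppL C1 N => CAppL (ctx_fill C1 D) N
  | CAppR N C1 => CAppR N (ctx_fill C1 D)
  end.

Fixpoint ctx_names (C : ctx) : seq nat :=
  match C with
  | Hole => [::]
  | CLam x C1 => x :: ctx_names C1
  | CAppL C1 N => ctx_names C1 ++ fv N
  | CAppR N C1 => fv N ++ ctx_names C1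
  end.

(* Expressions: one common syntax for Lambda^bullet and Lambda^rb.     *)
(*   EA M      : the atom  M_  (a constant) for M in Lambda            *)
(*   EBox C e  : the pair < C[ ], e >                                  *)
Inductive ex : Type :=
| EB : nat -> ex
| EA : term -> ex
| EApp : ex -> ex -> ex
| ELam : ex -> ex
| EBox : ctx -> ex -> ex.

Fixpoint bullet (t : term) : ex :=
  match t with
  | bvar i => EB i
  | fvar x => EA (fvar x)
  | app t1 t2 => EApp (bullet t1) (bullet t2)
  | lam t1 => ELam (bullet t1)
  end.

Definition in_bullet (e : ex) : Prop := exists M, lc M /\ e = bullet M.

Fixpoint ex_open_rec (k : nat) (u e : ex) : ex :=
  match e with
  | EB i => if i == k then u else EB i
  | EA M => EA M
  | EApp e1 e2 => EApp (ex_open_rec k u e1) (ex_open_rec k u e2)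
  | ELam e1 => ELam (ex_open_rec k.+1 u e1)
  | EBox C e1 => EBox C e1
  end.
(* for a body M of ELam M (i.e. \x.M),  ex_open M u = M[x:=u] *)
Definition ex_open (e u : ex) := ex_open_rec 0 u e.

Fixpoint ex_names (e : ex) : seq nat :=
  match e with
  | EB _ => [::]
  | EA M => fv M
  | EApp e1 e2 => ex_names e1 ++ ex_names e2
  | ELam e1 => ex_names e1
  | EBox C e1 => ctx_names C ++ ex_names e1
  end.

Definition apps (M : ex) (Ns : seq ex) : ex := foldl EApp M Ns.

Inductive rb : ex -> Prop :=
| rb_atom : forall M, lc M -> rb (EA M)
| rb_box : forall C M, ctx_ok C -> in_bullet M -> rb (EBox C M)
| rb_boxapp : forall C M Ns, ctx_ok C -> rb M -> List.Forall in_bullet Ns ->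
    rb (EBox C (apps M Ns)).

Inductive step : ex -> ex -> Prop :=
| R1 : forall C M, ctx_ok C -> lc M ->
    step (EBox C (EA M)) (EA (plug C M))
| R2 : forall C M x, ctx_ok C -> in_bullet (ELam M) ->
    (* the bound variable x is chosen fresh (Barendregt convention) *)
    x \notin ctx_names C ++ ex_names M ->
    step (EBox C (ELam M))
         (EBox (ctx_fill C (CLam x Hole)) (ex_open M (EA (fvar x))))
| R3 : forall C M N0 Ns, ctx_ok C -> lc M -> in_bullet N0 ->
    List.Forall in_bullet Ns ->
    step (EBox C (apps (EA M) (N0 :: Ns)))
         (EBox C (apps (EBox (CAppR M Hole) N0) Ns))
| R4 : forall C M N0 Ns, ctx_ok C -> in_bullet (ELam M) -> in_bullet N0 ->
    List.Forall in_bullet Ns ->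
    step (EBox C (apps (ELam M) (N0 :: Ns)))
         (EBox C (apps (ex_open M N0) Ns))
| R5 : forall C M M' Ns, rb M -> rb M' -> step M M' -> ctx_ok C ->
    List.Forall in_bullet Ns ->
    step (EBox C (apps M Ns)) (EBox C (apps M' Ns)).

Definition steps : ex -> ex -> Prop := clos_refl_trans ex step.

From Stdlib Require Import Relations List Lia.
From mathcomp Require Import all_boot zify.
Set Implicit Arguments.
Unset Strict Implicit.

(* Soundness: reading an expression back as a lambda-term (an atom as itself, a
   box <C, e> as C filled with the read-back of e) turns every step into a
   beta-reduction sequence.  The atom reached is normal by an invariant of the
   machine: contexts only grow by an abstraction (R2) or by a neutral normal form
   applied to the hole (R3), so R1 plugs normal forms into contexts preserving
   normality.

   Completeness: by standardization (in Takahashi's form [std]), M ->>beta N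
   means that M weak-head reduces to the head shape of N and the immediate
   subterms are again related by [std].  The machine follows this structure:
   R4 and R5 perform weak-head reduction, R2 goes under an abstraction, and R3
   evaluates the arguments of a head variable one after the other. *)

Lemma clos_rt_map (A B : Type) (R : relation A) (S : relation B) (f : A -> B) :
  (forall x y, R x y -> clos_refl_trans B S (f x) (f y)) ->
  forall x y, clos_refl_trans A R x y -> clos_refl_trans B S (f x) (f y).
Proof.
move=> Hf x y; elim=> [u v /Hf //|u|u v w _ IHuv _ IHvw]; first exact: rt_refl.
exact: rt_trans IHuv IHvw.
Qed.

(** * Locally nameless infrastructure *)

Fixpoint subst (x : nat) (u t : term) : term :=
  match t with
  | bvar i => bvar i
  | fvar y => if y == x then u else fvar y
  | app a b => app (subst x u a) (subst x u b)
  | lam a => lam (subst x u a)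
  end.

Fixpoint tsize (t : term) : nat :=
  match t with
  | bvar _ | fvar _ => 1
  | app a b => (tsize a + tsize b).+1
  | lam a => (tsize a).+1
  end.

Lemma closed_at_weaken t k j : closed_at k t -> k <= j -> closed_at j t.
Proof.
elim: t k j => [i|x|a IHa b IHb|a IHa] k j //=; first exact: leq_trans.
- by move=> /andP[Ha Hb] Hkj; rewrite (IHa k) // (IHb k).
- by move=> Ha Hkj; apply: IHa Ha _.
Qed.

Lemma open_rec_closed t k u : closed_at k t -> open_rec k u t = t.
Proof.
elim: t k => [i|x|a IHa b IHb|a IHa] k //=.
- by move=> Hi; case: eqP => // Eik; rewrite Eik ltnn in Hi.
- by move=> /andP[Ha Hb]; rewrite IHa // IHb.
- by move=> Ha; rewrite IHa.
Qed.

Lemma closed_at_open t k u :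
  closed_at k.+1 t -> closed_at k u -> closed_at k (open_rec k u t).
Proof.
elim: t k => [i|x|a IHa b IHb|a IHa] k //=.
- by move=> Hi Hu; case: eqP => //= /eqP Hik; rewrite ltn_neqAle Hik -ltnS.
- by move=> /andP[Ha Hb] Hu; rewrite IHa // IHb.
- by move=> Ha Hu; rewrite IHa // (closed_at_weaken Hu).
Qed.

Lemma closed_at_open_inv t k u : closed_at k (open_rec k u t) -> closed_at k.+1 t.
Proof.
elim: t k => [i|x|a IHa b IHb|a IHa] k //=.
- by case: eqP => [->|_ /ltnW].
- by move=> /andP[/IHa -> /IHb ->].
- exact: IHa.
Qed.

Lemma closed_at_close t k x : closed_at k t -> closed_at k.+1 (close_rec k x t).
Proof.
elim: t k => [i|y|a IHa b IHb|a IHa] k //=.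
- exact: ltnW.
- by case: (y == x) => /=.
- by move=> /andP[/IHa -> /IHb ->].
- exact: IHa.
Qed.

Lemma closed_at_subst t k x u : closed_at k t -> lc u -> closed_at k (subst x u t).
Proof.
elim: t k => [i|y|a IHa b IHb|a IHa] k //=.
- by case: eqP => // _ _ Hu; apply: closed_at_weaken Hu _.
- by move=> /andP[Ha Hb] Hu; rewrite IHa // IHb.
- by move=> Ha Hu; rewrite IHa.
Qed.

Lemma subst_open_rec t k x u w : lc u ->
  subst x u (open_rec k w t) = open_rec k (subst x u w) (subst x u t).
Proof.
move=> Hu; elim: t k => [i|y|a IHa b IHb|a IHa] k //=.
- by case: eqP.
- by case: eqP => // _; rewrite open_rec_closed // (closed_at_weaken Hu).
- by rewrite IHa IHb.
- by rewrite IHa.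
Qed.

Lemma subst_open_var t x y u : y != x -> lc u ->
  open (subst x u t) (fvar y) = subst x u (open t (fvar y)).
Proof. by move=> Hyx Hu; rewrite /open subst_open_rec //= (negbTE Hyx). Qed.

Lemma subst_intro t k x u : x \notin fv t ->
  subst x u (open_rec k (fvar x) t) = open_rec k u t.
Proof.
elim: t k => [i|y|a IHa b IHb|a IHa] k //=.
- by case: eqP => //= _; rewrite eqxx.
- by rewrite inE eq_sym => /negbTE ->.
- by rewrite mem_cat negb_or => /andP[Ha Hb]; rewrite IHa // IHb.
- by move=> Ha; rewrite IHa.
Qed.

Lemma open_close_rec t k x u : closed_at k t ->
  open_rec k u (close_rec k x t) = subst x u t.
Proof.
elim: t k => [i|y|a IHa b IHb|a IHa] k //=.
- by move=> Hi; case: eqP => // Eik; rewrite Eik ltnn in Hi.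
- by case: eqP => //= _; rewrite eqxx.
- by move=> /andP[Ha Hb]; rewrite IHa // IHb.
- by move=> Ha; rewrite IHa.
Qed.

Lemma close_open_rec t k x : x \notin fv t ->
  close_rec k x (open_rec k (fvar x) t) = t.
Proof.
elim: t k => [i|y|a IHa b IHb|a IHa] k //=.
- by case: eqP => [->|] //=; rewrite eqxx.
- by rewrite inE eq_sym => /negbTE ->.
- by rewrite mem_cat negb_or => /andP[Ha Hb]; rewrite IHa // IHb.
- by move=> Ha; rewrite IHa.
Qed.

Lemma tsize_open_var t k y : tsize (open_rec k (fvar y) t) = tsize t.
Proof.
by elim: t k => [i|x|a IHa b IHb|a IHa] k //=; [case: eqP|rewrite IHa IHb|rewrite IHa].
Qed.

Definition fresh (L : seq nat) : nat := (sumn L).+1.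

Lemma fresh_notin L : fresh L \notin L.
Proof.
have le_sumn x : x \in L -> x <= sumn L.
  elim: L => // a L IH; rewrite inE => /orP[/eqP->|/IH]; first exact: leq_addr.
  by move/leq_trans; apply; apply: leq_addl.
by apply/negP => /le_sumn; rewrite ltnn.
Qed.

Lemma lc_term_ind (P : term -> Prop) :
  (forall x, P (fvar x)) ->
  (forall a b, lc a -> lc b -> P a -> P b -> P (app a b)) ->
  (forall a, lc (lam a) -> (forall y, P (open a (fvar y))) -> P (lam a)) ->
  forall t, lc t -> P t.
Proof.
move=> Hvar Happ Hlam t; move: (leqnn (tsize t)); move: {2}(tsize t) => n.
elim: n t => [|n IH] [i|x|a b|a] /= Hsize Ht //.
- case/andP: Ht => Ha Hb; apply: Happ => //; apply: IH => //; lia.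
- apply: Hlam => // y; apply: IH; last exact: closed_at_open.
  by rewrite tsize_open_var; lia.
Qed.

(** * Beta-reduction and normal forms *)

Lemma beta_lc M N : beta M N -> lc M /\ lc N.
Proof.
elim=> {M N} [M N HM HN|M M' N _ [HM HM'] HN|M N N' HM _ [HN HN']|L M M' _ IH].
- by split; [apply/andP | apply: closed_at_open].
- by split; apply/andP.
- by split; apply/andP.
- have [HM HM'] := IH _ (fresh_notin L).
  by split; apply: closed_at_open_inv; [exact: HM | exact: HM'].
Qed.

Lemma beta_subst M M' x u : lc u -> beta M M' -> beta (subst x u M) (subst x u M').
Proof.
move=> Hu; elim=> {M M'} [M N HM HN|M M' N _ IH HN|M N N' HM _ IH|L M M' _ IH] /=.
- rewrite /open subst_open_rec //.
  by apply: beta_red; apply: closed_at_subst.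
- by apply: beta_appl => //; apply: closed_at_subst.
- by apply: beta_appr => //; apply: closed_at_subst.
- apply: (@beta_lam (x :: L)) => y; rewrite inE negb_or => /andP[Hyx HyL].
  by rewrite !subst_open_var //; apply: IH.
Qed.

Lemma beta_lam_close x A A' : beta A A' -> beta (lam (close x A)) (lam (close x A')).
Proof.
move=> HAA'; have [HA HA'] := beta_lc HAA'.
apply: (@beta_lam [::]) => y _.
by rewrite /open /close !open_close_rec //; apply: beta_subst.
Qed.

Definition apps_term (M : term) (Ns : seq term) : term := foldl app M Ns.

Lemma betas_plug_apps C Ns A A' : ctx_ok C -> List.Forall lc Ns ->
  beta_star A A' -> beta_star (plug C (apps_term A Ns)) (plug C (apps_term A' Ns)).
Proof.
move=> HC HNs; apply: (clos_rt_map (f := fun t => plug C (apps_term t Ns))).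
move=> {}A {}A' HAA'; apply: rt_step.
elim: C HC => [_|x C IH|C IH N|N C IH] /=.
- elim: HNs A A' HAA' => //= N Ns' HN _ IH A A' HAA'.
  by apply: IH; apply: beta_appl.
- by move/IH; apply: beta_lam_close.
- by case/andP=> /IH; apply: beta_appl.
- by case/andP=> HN /IH; apply: beta_appr.
Qed.

Fixpoint neutral (t : term) : bool :=
  match t with
  | bvar _ | fvar _ => true
  | app a b => neutral a && normal b
  | lam _ => false
  end
with normal (t : term) : bool :=
  match t with
  | bvar _ | fvar _ => true
  | app a b => neutral a && normal b
  | lam a => normal a
  end.

Lemma neutral_normal t : neutral t -> normal t.
Proof. by case: t. Qed.

Lemma normal_open_var t k y : normal (open_rec k (fvar y) t) = normal t.
Proof.
suff : neutral (open_rec k (fvar y) t) = neutral t /\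
       normal (open_rec k (fvar y) t) = normal t by case.
elim: t k => [i|x|a IHa b IHb|a IHa] k //=.
- by case: eqP.
- by case: (IHa k) => -> _; case: (IHb k) => _ ->.
- by case: (IHa k.+1) => _ ->.
Qed.

Lemma normal_close t k y : normal (close_rec k y t) = normal t.
Proof.
suff : neutral (close_rec k y t) = neutral t /\
       normal (close_rec k y t) = normal t by case.
elim: t k => [i|x|a IHa b IHb|a IHa] k //=.
- by case: eqP.
- by case: (IHa k) => -> _; case: (IHb k) => _ ->.
- by case: (IHa k.+1) => _ ->.
Qed.

Lemma beta_not_normal M M' : beta M M' -> ~~ normal M.
Proof.
elim=> {M M'} //= [M M' N _ IH _|M N N' _ _ IH|L M M' _ IH].
- by apply: contra IH => /andP[/neutral_normal].
- by rewrite andbC; apply: contra IH => /andP[].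
- by rewrite -(normal_open_var M 0 (fresh L)); apply: IH; apply: fresh_notin.
Qed.

Lemma NF_normal N : NF N -> normal N.
Proof.
case=> HN; move: N HN; apply: lc_term_ind => // [a b Ha Hb IHa IHb|a Ha IH] Hirred /=.
- have nfa : normal a.
    by apply: IHa => -[a' Haa']; apply: Hirred; exists (app a' b); apply: beta_appl.
  have nfb : normal b.
    by apply: IHb => -[b' Hbb']; apply: Hirred; exists (app a b'); apply: beta_appr.
  rewrite nfb andbT; case: a Ha nfa Hirred {IHa} => //= a Ha _ Hirred.
  by case: Hirred; eexists; apply: beta_red.
- set y := fresh (fv a); have Hy : y \notin fv a := fresh_notin _.
  rewrite -(normal_open_var a 0 y); apply: IH => -[T HT]; apply: Hirred.
  exists (lam (close y T)); rewrite -{1}(close_open_rec 0 Hy).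
  exact: beta_lam_close.
Qed.

Lemma normal_NF N : lc N -> normal N -> NF N.
Proof. by move=> HN nfN; split=> // -[N' /beta_not_normal]; rewrite nfN. Qed.

(** * Standardization *)

Inductive whr : term -> term -> Prop :=
| whr_beta M N : lc (lam M) -> lc N -> whr (app (lam M) N) (open M N)
| whr_app M M' N : whr M M' -> lc N -> whr (app M N) (app M' N).

Definition whrs : term -> term -> Prop := clos_refl_trans term whr.

Lemma whr_lc M M' : whr M M' -> lc M /\ lc M'.
Proof.
elim=> {M M'} [M N HM HN|M M' N _ [HM HM'] HN].
- by split; [apply/andP | apply: closed_at_open].
- by split; apply/andP.
Qed.

Lemma whrs_lc M M' : whrs M M' -> lc M -> lc M'.
Proof. by elim=> // [u v /whr_lc[]|u v w _ IHuv _ IHvw /IHuv /IHvw]. Qed.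

Lemma whrs_app M M' N : lc N -> whrs M M' -> whrs (app M N) (app M' N).
Proof.
move=> HN; apply: (clos_rt_map (f := app^~ N)) => u v Huv.
by apply: rt_step; apply: whr_app.
Qed.

Lemma whrs_subst M M' x u : lc u -> whrs M M' -> whrs (subst x u M) (subst x u M').
Proof.
move=> Hu; apply: (clos_rt_map (f := subst x u)) => {}M {}M' HMM'; apply: rt_step.
elim: HMM' => {M M'} [M N HM HN|M M' N _ IH HN] /=.
- by rewrite /open subst_open_rec //; apply: whr_beta; apply: closed_at_subst.
- by apply: whr_app => //; apply: closed_at_subst.
Qed.

Inductive std : term -> term -> Prop :=
| std_var M x : lc M -> whrs M (fvar x) -> std M (fvar x)
| std_app M P Q P' Q' : lc M -> whrs M (app P Q) -> std P P' -> std Q Q' ->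
    std M (app P' Q')
| std_lam (L : seq nat) M P P' : lc M -> whrs M (lam P) ->
    (forall y, y \notin L -> std (open P (fvar y)) (open P' (fvar y))) ->
    std M (lam P').

Lemma std_lc M N : std M N -> lc M /\ lc N.
Proof.
elim=> {M N} // [M P Q P' Q' HM _ _ [_ HP'] _ [_ HQ']|L M P P' HM _ _ IH].
- by split=> //; apply/andP.
- split=> //; have [_ HP'] := IH _ (fresh_notin L).
  exact: closed_at_open_inv HP'.
Qed.

Lemma whrs_std M M1 N : lc M -> whrs M M1 -> std M1 N -> std M N.
Proof.
move=> HM HMM1 HM1N.
case: HM1N HMM1 => {N} [M0 x _ HM1|M0 P Q P' Q' _ HM1 HP HQ|L M0 P P' _ HM1 HP] HMM1.
- by apply: std_var HM _; apply: rt_trans HMM1 HM1.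
- by apply: std_app HM _ HP HQ; apply: rt_trans HMM1 HM1.
- by apply: std_lam HM _ HP; apply: rt_trans HMM1 HM1.
Qed.

Lemma std_refl M : lc M -> std M M.
Proof.
move: M; apply: lc_term_ind => [x|a b Ha Hb IHa IHb|a Ha IH].
- exact: std_var (rt_refl _ _ _).
- by apply: std_app (rt_refl _ _ _) IHa IHb; apply/andP.
- exact: (@std_lam [::]) Ha (rt_refl _ _ _) (fun y _ => IH y).
Qed.

Lemma std_subst M M' x N N' : std M M' -> std N N' -> std (subst x N M) (subst x N' M').
Proof.
move=> HMM' HNN'; have [HN HN'] := std_lc HNN'.
elim: HMM' => {M M'} [M y HM HMy|M P Q P' Q' HM HMPQ _ IHP _ IHQ|L M P P' HM HMP _ IH] /=.
- have HMs := closed_at_subst x HM HN.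
  move: (whrs_subst x HN HMy) => /=; case: eqP => _ HMy'.
  + exact: whrs_std HMy' HNN'.
  + exact: std_var.
- by apply: std_app IHP IHQ; [apply: closed_at_subst | apply: (whrs_subst x HN HMPQ)].
- apply: (@std_lam (x :: L)); [exact: closed_at_subst | exact: (whrs_subst x HN HMP) |].
  move=> y; rewrite inE negb_or => /andP[Hyx HyL].
  by rewrite !subst_open_var //; apply: IH.
Qed.

Lemma std_open (L : seq nat) R R' Q Q' :
  (forall y, y \notin L -> std (open R (fvar y)) (open R' (fvar y))) -> std Q Q' ->
  std (open R Q) (open R' Q').
Proof.
move=> HR HQ; set y := fresh (L ++ fv R ++ fv R').
have : y \notin L ++ fv R ++ fv R' := fresh_notin _.
rewrite !mem_cat !negb_or => /and3P[HyL HyR HyR'].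
rewrite /open -(subst_intro 0 Q HyR) -(subst_intro 0 Q' HyR').
exact: std_subst (HR y HyL) HQ.
Qed.

Lemma std_beta M N N' : std M N -> beta N N' -> std M N'.
Proof.
move=> HMN; elim: HMN N' => {M N}
  [M x _ _|M P Q P' Q' HM HMPQ HPP' IHP HQQ' IHQ|L M P P' HM HMP _ IH] N' Hbeta.
- by inversion Hbeta.
- inversion Hbeta as [R Q1 HR HQ1|P1 P1' Q1 HP1|P1 Q1 Q1' HP1 HQ1|]; subst.
  + inversion HPP' as [| |L' P0 R0 R1 HP HPR0 HR0]; subst.
    have [HQ _] := std_lc HQQ'.
    apply: whrs_std (std_open HR0 HQQ') => //.
    apply: rt_trans HMPQ _; apply: rt_trans (whrs_app HQ HPR0) _.
    by apply: rt_step; apply: whr_beta (whrs_lc HPR0 HP) HQ.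
  + by apply: std_app HMPQ _ HQQ' => //; apply: IHP.
  + by apply: std_app HMPQ HPP' _ => //; apply: IHQ.
- inversion Hbeta as [| | |L' P1 P1' HP1]; subst.
  apply: (@std_lam (L ++ L')) HM HMP _ => y.
  by rewrite mem_cat negb_or => /andP[HyL HyL']; apply: IH (HP1 y HyL').
Qed.

Lemma betas_std M N : lc M -> beta_star M N -> std M N.
Proof.
move=> HM /clos_rt_rtn1_iff; elim=> [|N0 N1 HN01 _ IH]; first exact: std_refl.
exact: std_beta IH HN01.
Qed.

(** * Expressions *)

Lemma bullet_open_rec t k u :
  bullet (open_rec k u t) = ex_open_rec k (bullet u) (bullet t).
Proof.
by elim: t k => [i|x|a IHa b IHb|a IHa] k //=; [case: eqP|rewrite IHa IHb|rewrite IHa].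
Qed.

Lemma ex_open_bullet t u : ex_open (bullet t) (bullet u) = bullet (open t u).
Proof. by rewrite /open bullet_open_rec. Qed.

Lemma ex_names_bullet t : ex_names (bullet t) = fv t.
Proof. by elim: t => //= a -> b ->. Qed.

Lemma in_bullet_lam M : in_bullet (ELam M) -> exists2 T, lc (lam T) & M = bullet T.
Proof. by case=> -[i|x|a b|T] [HT] //= [->]; exists T. Qed.

Lemma in_bullet_open M N : in_bullet (ELam M) -> in_bullet N -> in_bullet (ex_open M N).
Proof.
case/in_bullet_lam=> T HT -> [U [HU ->]].
by rewrite ex_open_bullet; exists (open T U); split=> //; apply: closed_at_open.
Qed.

Lemma in_bullet_apps M Ns :
  in_bullet M -> List.Forall in_bullet Ns -> in_bullet (apps M Ns).
Proof.
move=> HM HNs; elim: HNs M HM => //= N Ns' [U [HU ->]] _ IH _ [T [HT ->]].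
by apply: IH; exists (app T U); split=> //; apply/andP.
Qed.

Lemma Forall_in_bullet_map Qs :
  List.Forall lc Qs -> List.Forall in_bullet (map bullet Qs).
Proof. by elim=> //= Q Qs' HQ _ IH; constructor=> //; exists Q. Qed.

Lemma plug_fill C D t : plug (ctx_fill C D) t = plug C (plug D t).
Proof. by elim: C => [|x C /= ->|C /= -> N|N C /= ->]. Qed.

Lemma ctx_ok_fill C D : ctx_ok C -> ctx_ok D -> ctx_ok (ctx_fill C D).
Proof.
elim: C => [//|x C IH|C IH N|N C IH] /=; first exact: IH.
- by case/andP=> HC -> HD; rewrite IH.
- by case/andP=> -> HC HD; rewrite IH.
Qed.

Lemma lc_plug C t : ctx_ok C -> lc t -> lc (plug C t).
Proof.
elim: C => [//|x C IH|C IH N|N C IH] /= HC Ht.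
- exact: closed_at_close (IH HC Ht).
- by case/andP: HC => HC HN; apply/andP; split; first exact: IH.
- by case/andP: HC => HN HC; apply/andP; split; last exact: IH.
Qed.

Lemma step_rb_l a b : step a b -> rb a.
Proof.
case=> {a b} [C M HC HM|C M x HC HM _|C M N0 Ns HC HM HN0 HNs|C M N0 Ns HC HM HN0 HNs
  |C M M' Ns HM _ _ HC HNs].
- by apply: (@rb_boxapp C (EA M) [::]) => //; apply: rb_atom.
- exact: rb_box.
- by apply: rb_boxapp => //; [apply: rb_atom | constructor].
- by apply: rb_box => //; apply: (in_bullet_apps (Ns := N0 :: Ns) HM); constructor.
- exact: rb_boxapp.
Qed.

Lemma step_rb_r a b : step a b -> rb b.
Proof.
case=> {a b} [C M HC HM|C M x HC HM _|C M N0 Ns HC HM HN0 HNs|C M N0 Ns HC HM HN0 HNs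
  |C M M' Ns _ HM' _ HC HNs].
- by apply: rb_atom; apply: lc_plug.
- apply: rb_box; first exact: ctx_ok_fill.
  by apply: in_bullet_open HM _; exists (fvar x).
- by apply: rb_boxapp => //; apply: rb_box; rewrite /= ?HM.
- by apply: rb_box => //; apply: in_bullet_apps => //; apply: in_bullet_open.
- exact: rb_boxapp.
Qed.

Lemma steps_box_apps C Ns a b : ctx_ok C -> List.Forall in_bullet Ns ->
  steps a b -> steps (EBox C (apps a Ns)) (EBox C (apps b Ns)).
Proof.
move=> HC HNs; apply: (clos_rt_map (f := fun e => EBox C (apps e Ns))) => u v Huv.
by apply: rt_step; apply: R5 (step_rb_l Huv) (step_rb_r Huv) Huv HC HNs.
Qed.

(** * Soundness *)

Fixpoint decode (e : ex) : term :=
  match e with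
  | EB i => bvar i
  | EA t => t
  | EApp a b => app (decode a) (decode b)
  | ELam a => lam (decode a)
  | EBox C a => plug C (decode a)
  end.

Lemma decode_bullet t : decode (bullet t) = t.
Proof. by elim: t => //= [a -> b ->|a ->]. Qed.

Lemma decode_apps e Ns : decode (apps e Ns) = apps_term (decode e) (map decode Ns).
Proof. by elim: Ns e => //= N Ns IH e; rewrite IH. Qed.

Lemma Forall_lc_decode Ns : List.Forall in_bullet Ns -> List.Forall lc (map decode Ns).
Proof. by elim=> //= e es [t [Ht ->]] _ IH; constructor; rewrite ?decode_bullet. Qed.

Lemma step_betas a b : step a b -> beta_star (decode a) (decode b).
Proof.
elim=> {a b} [C M _ _|C M x HC HM Hx|C M N0 Ns _ _ _ _|C M N0 Ns HC HM HN0 HNs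
  |C M M' Ns _ _ _ IH HC HNs] /=.
- exact: rt_refl.
- case/in_bullet_lam: HM => T HT EM; subst M.
  move: Hx; rewrite mem_cat negb_or ex_names_bullet => /andP[_ Hx].
  rewrite plug_fill /= -[EA _]/(bullet (fvar x)) ex_open_bullet !decode_bullet.
  by rewrite /close close_open_rec //; apply: rt_refl.
- by rewrite !decode_apps; apply: rt_refl.
- rewrite !decode_apps /=; apply: betas_plug_apps => //; first exact: Forall_lc_decode.
  case/in_bullet_lam: HM => T HT ->; case: HN0 => U [HU ->].
  by rewrite ex_open_bullet !decode_bullet; apply: rt_step; apply: beta_red.
- by rewrite !decode_apps; apply: betas_plug_apps => //; apply: Forall_lc_decode.
Qed.

Lemma steps_betas a b : steps a b -> beta_star (decode a) (decode b).
Proof. exact: (clos_rt_map (f := decode) step_betas). Qed.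

(* [nf_top] is the invariant of the machine; boxes below the top level sit in
   head position and their context starts with a neutral term applied to the hole. *)
Fixpoint nf_ctx (C : ctx) : bool :=
  match C with
  | Hole => true
  | CLam _ C1 => nf_ctx C1
  | CAppL _ _ => false
  | CAppR N C1 => neutral N && nf_ctx C1
  end.

Definition ne_ctx (C : ctx) : bool :=
  if C is CAppR N C1 then neutral N && nf_ctx C1 else false.

Fixpoint ne_ex (e : ex) : bool :=
  match e with
  | EA t => neutral t
  | EBox C e1 => ne_ctx C && nf_ex e1
  | EApp a _ => ne_ex a
  | _ => true
  end
with nf_ex (e : ex) : bool :=
  match e with
  | EA t => normal t
  | EBox C e1 => ne_ctx C && nf_ex e1
  | EApp a _ => ne_ex a
  | _ => true
  end.

Definition nf_top (e : ex) : bool :=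
  match e with
  | EA t => normal t
  | EBox C e1 => nf_ctx C && nf_ex e1
  | _ => true
  end.

Lemma ne_nf_ex e : ne_ex e -> nf_ex e.
Proof. by case: e => //= t; apply: neutral_normal. Qed.

Lemma nf_ex_bullet t : ne_ex (bullet t) /\ nf_ex (bullet t).
Proof. by elim: t => //= a [-> _]. Qed.

Lemma nf_ex_in_bullet e : in_bullet e -> nf_ex e.
Proof. by case=> t [_ ->]; case: (nf_ex_bullet t). Qed.

Lemma nf_ex_apps_cons h N Ns : nf_ex (apps h (N :: Ns)) = ne_ex h.
Proof. by elim: Ns h N => //= N' Ns IH h N; rewrite IH. Qed.

Lemma nf_ctx_plug C t : nf_ctx C -> normal t -> normal (plug C t).
Proof.
elim: C => [//|x C IH|//|N C IH] /=.
- by move=> HC Ht; rewrite normal_close IH.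
- by case/andP=> -> HC Ht; rewrite IH.
Qed.

Lemma ne_ctx_plug C t : ne_ctx C -> normal t -> neutral (plug C t).
Proof. by case: C => //= N C /andP[-> HC] Ht; rewrite nf_ctx_plug. Qed.

Lemma nf_ctx_fill C D : nf_ctx C -> nf_ctx D -> nf_ctx (ctx_fill C D).
Proof. by elim: C => [//|x C IH|//|N C IH] //= /andP[-> HC] HD; rewrite IH. Qed.

Lemma ne_ctx_fill C D : ne_ctx C -> nf_ctx D -> ne_ctx (ctx_fill C D).
Proof. by case: C => //= N C /andP[-> HC] HD; rewrite nf_ctx_fill. Qed.

Lemma step_box_l a b : step a b -> exists C e, a = EBox C e.
Proof. by case=> *; do 2 eexists. Qed.

Lemma step_nf_top a b : step a b -> (nf_top a -> nf_top b) /\ (ne_ex a -> ne_ex b).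
Proof.
elim=> {a b} [C M _ _|C M x _ HM _|C M N0 Ns _ _ HN0 _|C M N0 Ns _ HM HN0 HNs
  |C M M' Ns _ _ HMM' [_ IH] _ _] /=.
- by split=> /andP[]; [apply: nf_ctx_plug | apply: ne_ctx_plug].
- have Hnf : nf_ex (ex_open M (EA (fvar x))).
    by apply: nf_ex_in_bullet; apply: in_bullet_open HM _; exists (fvar x).
  by rewrite Hnf !andbT; split=> HC; [apply: nf_ctx_fill | apply: ne_ctx_fill].
- have Hnf : nf_ex (apps (EA M) (N0 :: Ns)) -> nf_ex (apps (EBox (CAppR M Hole) N0) Ns).
    rewrite nf_ex_apps_cons /= => HM.
    by case: Ns => [|N Ns] /=; rewrite ?nf_ex_apps_cons /= HM nf_ex_in_bullet.
  by split=> /andP[-> /Hnf].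
- have Hnf : nf_ex (apps (ex_open M N0) Ns).
    by apply: nf_ex_in_bullet; apply: in_bullet_apps HNs; apply: in_bullet_open.
  by rewrite Hnf !andbT; split=> /andP[].
- have Hnf : nf_ex (apps M Ns) -> nf_ex (apps M' Ns).
    case: Ns => [|N Ns] /=; last by rewrite !nf_ex_apps_cons.
    case: (step_box_l HMM') => C' [e' EM] HM.
    by apply/ne_nf_ex/IH; move: HM; rewrite EM.
  by split=> /andP[-> /Hnf].
Qed.

Lemma steps_nf_top a b : steps a b -> nf_top a -> nf_top b.
Proof.
elim=> // [u v /step_nf_top[] //|u v w _ IHuv _ IHvw /IHuv /IHvw //].
Qed.

(** * Completeness *)

Lemma whr_step C Qs M M' : ctx_ok C -> List.Forall lc Qs -> whr M M' ->
  step (EBox C (apps (bullet M) (map bullet Qs)))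
       (EBox C (apps (bullet M') (map bullet Qs))).
Proof.
move=> HC HQs HMM'; elim: HMM' Qs HQs => {M M'} [M N HM HN|M M' N _ IH HN] Qs HQs.
- rewrite /= -ex_open_bullet; apply: R4 => //; last exact: Forall_in_bullet_map.
  + by exists (lam M).
  + by exists N.
- by apply: (IH (N :: Qs)); constructor.
Qed.

Lemma whrs_steps C Qs M M' : ctx_ok C -> List.Forall lc Qs -> whrs M M' ->
  steps (EBox C (apps (bullet M) (map bullet Qs)))
        (EBox C (apps (bullet M') (map bullet Qs))).
Proof.
move=> HC HQs.
apply: (clos_rt_map (f := fun t => EBox C (apps (bullet t) (map bullet Qs)))) => u v Huv.
by apply: rt_step; apply: whr_step.
Qed.

Definition evaluates (M N : term) : Prop :=
  lc M /\ lc N /\ forall C, ctx_ok C -> steps (EBox C (bullet M)) (EA (plug C N)).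

Definition spine_evaluates (M N : term) : Prop :=
  forall C Qs Ns, ctx_ok C -> List.Forall2 evaluates Qs Ns ->
  steps (EBox C (apps (bullet M) (map bullet Qs))) (EA (plug C (apps_term N Ns))).

Lemma Forall2_evaluates_lc Qs Ns : List.Forall2 evaluates Qs Ns -> List.Forall lc Qs.
Proof. by elim=> // Q N Qs' Ns' [HQ _] _ IH; constructor. Qed.

Lemma whrs_evaluates M M1 N : whrs M M1 -> lc M -> evaluates M1 N -> evaluates M N.
Proof.
move=> HMM1 HM [_ [HN HM1N]]; split=> //; split=> // C HC.
exact: rt_trans (whrs_steps HC (List.Forall_nil _) HMM1) (HM1N C HC).
Qed.

Lemma whrs_spine_evaluates M M1 N :
  whrs M M1 -> spine_evaluates M1 N -> spine_evaluates M N.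
Proof.
move=> HMM1 HM1N C Qs Ns HC HQN.
exact: rt_trans (whrs_steps HC (Forall2_evaluates_lc HQN) HMM1) (HM1N C Qs Ns HC HQN).
Qed.

Lemma steps_atom_apps h Qs Ns C : lc h -> ctx_ok C -> List.Forall2 evaluates Qs Ns ->
  steps (EBox C (apps (EA h) (map bullet Qs))) (EA (plug C (apps_term h Ns))).
Proof.
move=> Hh HC HQN; elim: HQN h Hh => {Qs Ns} [|Q N Qs Ns [HQ [HN HQN]] HQNs IH] h Hh /=.
  by apply/rt_step/R1.
have HQs := Forall_in_bullet_map (Forall2_evaluates_lc HQNs).
apply: rt_trans (rt_step _ _ _ _ (R3 HC Hh _ HQs)) _; first by exists Q.
apply: rt_trans (steps_box_apps HC HQs (HQN (CAppR h Hole) _)) _; first by rewrite /= Hh.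
by apply: IH; apply/andP.
Qed.

Lemma spine_evaluates_var x : spine_evaluates (fvar x) (fvar x).
Proof. by move=> C Qs Ns HC HQN; apply: steps_atom_apps. Qed.

Lemma spine_evaluates_app P P' Q Q' :
  spine_evaluates P P' -> evaluates Q Q' -> spine_evaluates (app P Q) (app P' Q').
Proof.
by move=> HP HQ C Qs Ns HC HQN; apply: (HP C (Q :: Qs) (Q' :: Ns)) => //; constructor.
Qed.

Lemma evaluates_spine M N : lc M -> lc N -> spine_evaluates M N -> evaluates M N.
Proof. by move=> HM HN HMN; split=> //; split=> // C HC; apply: (HMN C [::] [::]). Qed.

Lemma evaluates_lam (L : seq nat) P P' : lc (lam P) ->
  (forall y, y \notin L -> evaluates (open P (fvar y)) (open P' (fvar y))) ->
  evaluates (lam P) (lam P').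
Proof.
move=> HP HPP'; have HP' : lc (lam P').
  by case: (HPP' _ (fresh_notin L)) => _ [/closed_at_open_inv].
split=> //; split=> // C HC.
set x := fresh (ctx_names C ++ fv P ++ L ++ fv P').
have : x \notin ctx_names C ++ fv P ++ L ++ fv P' := fresh_notin _.
rewrite !mem_cat !negb_or => /and4P[HxC HxP HxL HxP'].
apply: rt_trans.
  apply: rt_step; apply: (@R2 C (bullet P) x) => //; first by exists (lam P).
  by rewrite mem_cat ex_names_bullet negb_or HxC.
have -> : plug C (lam P') = plug (ctx_fill C (CLam x Hole)) (open P' (fvar x)).
  by rewrite plug_fill /= /close close_open_rec.
rewrite -[EA (fvar x)]/(bullet (fvar x)) ex_open_bullet.
by case: (HPP' x HxL) => _ [_]; apply; apply: ctx_ok_fill.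
Qed.

Lemma std_evaluates M N : std M N ->
  (normal N -> evaluates M N) /\ (neutral N -> spine_evaluates M N).
Proof.
move=> HMN; have [HM HN] := std_lc HMN.
elim: HMN HM HN => {M N} [M x HM HMx|M P Q P' Q' HM HMPQ HPP' IHP HQQ' IHQ
  |L M P P' HM HMP HPP' IH] _ HN.
- have Hspine := whrs_spine_evaluates HMx (spine_evaluates_var x).
  by split=> // _; apply: evaluates_spine.
- have [HP HP'] := std_lc HPP'; have [HQ HQ'] := std_lc HQQ'.
  have Hspine : neutral (app P' Q') -> spine_evaluates M (app P' Q').
    case/andP=> neP' nfQ'; apply: whrs_spine_evaluates HMPQ _.
    apply: spine_evaluates_app; first by case: (IHP HP HP') => _; apply.
    by case: (IHQ HQ HQ') => + _; apply.
  by split=> // /Hspine; apply: evaluates_spine.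
- split=> //= nfP'; apply: (whrs_evaluates HMP HM).
  apply: (@evaluates_lam L) => [|y HyL]; first exact: whrs_lc HMP HM.
  have [HPy HP'y] := std_lc (HPP' y HyL).
  by case: (IH y HyL HPy HP'y) => + _; apply; rewrite normal_open_var.
Qed.

Theorem completeness M N : lc M -> beta_star M N -> NF N ->
  steps (EBox Hole (bullet M)) (EA N).
Proof.
move=> HM HMN /NF_normal nfN.
by case: (std_evaluates (betas_std HM HMN)) => /(_ nfN) [_ [_ /(_ Hole isT)]].
Qed.

Theorem proposition7 (M N : term) :
  lc M -> lc N ->
  (steps (EBox Hole (bullet M)) (EA N) <-> (beta_star M N /\ NF N)).
Proof.
move=> HM HN; split=> [HMN|[HMN nfN]]; last exact: completeness.
split; first by have := steps_betas HMN; rewrite /= decode_bullet.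
apply: normal_NF => //; apply: (steps_nf_top HMN) => /=.
by case: (nf_ex_bullet M).
Qed.
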